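(* In the safe linear bandit setting and with the ROFUL quantities described in the context, suppose $\mathcal{X}$ is star-convex with respect to the origin, $\|x\|\le1$ for all $x\in\mathcal{X}$, and $\theta^\top x_*>0$. Then, on the event $\mathcal{E}_{\mathrm{conf}}$, ROFUL is equivalent to an algorithm that, for all $t\in[T]$, chooses $$x_t\in\arg\max_{x\in\bar{\mathcal{Y}}_t^p}\left(\hat\theta_t^\top x+\kappa_t(x)\beta_t\|x\|_{V_t^{-1}}\right);$$ that is, for every $t$, the set of actions ROFUL may play at round $t$ (over all admissible choices of the maximizer $\tilde x_t$) coincides with this argmax set.
   Context: Safe linear bandit setting: at round $t$ the learner plays $x_t$ in a closed set $\mathcal{X}\subseteq\mathbb{R}^d$ and observes $y_t=\theta^\top x_t+\epsilon_t$, $z_t=a^\top x_t+\eta_t$, with $\theta,a$ unknown, $b>0$ known; $\mathcal{Y}=\{x\in\mathcal{X}:a^\top x\le b\}$, $x_*\in\arg\max_{\mathcal{Y}}\theta^\top x$. Constants $S_a\ge\|a\|$, $S_\theta\ge\|\theta\|$, $S=\max(S_a,S_\theta)$, $\nu=b/S_a\le 1$, $\rho>0$, $\delta\in(0,1)$, $\lambda\ge1$. ROFUL: at round $t$, $V_t=\lambda I+\sum_{k<t}x_kx_k^\top$, $\hat a_t=V_t^{-1}\sum_{k<t}x_kz_k$, $\hat\theta_t=V_t^{-1}\sum_{k<t}x_ky_k$, $\beta_t=\rho\sqrt{d\log\left(\frac{1+(t-1)/\lambda}{\delta/2}\right)}+\sqrt\lambda S$, $\|x\|_M=\sqrt{x^\top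 Mx}$; $\mathcal{Y}_t^p=\{x\in\mathcal{X}:\hat a_t^\top x+\beta_t\|x\|_{V_t^{-1}}\le b\}$, $\mathcal{Y}_t^o=\{x\in\mathcal{X}:\hat a_t^\top x-\beta_t\|x\|_{V_t^{-1}}\le b\}$; $\tilde x_t\in\arg\max_{x\in\mathcal{Y}_t^o}(\hat\theta_t^\top x+\beta_t\|x\|_{V_t^{-1}})$; $\tilde b_t=\min(\nu/\|\tilde x_t\|,1)$, $\mu_t=\max\{\mu\in[0,1]:\mu\tilde x_t\in\mathcal{Y}_t^p\}$, $\gamma_t=\max(\tilde b_t,\mu_t)$; play $x_t=\gamma_t\tilde x_t$. $\mathcal{E}_{\mathrm{conf}}$ is the event that $|x^\top(\hat\theta_t-\theta)|\le\beta_t\|x\|_{V_t^{-1}}$ and $|x^\top(\hat a_t-a)|\le\beta_t\|x\|_{V_t^{-1}}$ for all $x\in\mathcal{X}$ and all $t\ge1$. Further notation: $\mathbb{B}$ is the closed Euclidean unit ball; $\hat{\mathcal{Y}}_t^p:=\mathcal{Y}_t^p\cup(\nu\mathbb{B}\cap\mathcal{Y}_t^o)$; $\bar{\mathcal{Y}}_t^p:=\{x\in\hat{\mathcal{Y}}_t^p:\zeta x\notin\hat{\mathcal{Y}}_t^p\ \forall\zeta>1\}$; $\alpha_t(x):=\max\{\mu\ge0:\mu x\in\mathcal{Y}_t^o\}$; and for $x\ne0$, $\kappa_t(x):=(\alpha_t(x)-1)\frac{\hat\theta_t^\top x}{\beta_t\|x\|_{V_t^{-1}}}+\alpha_t(x)$.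 *)

From mathcomp Require Import all_boot all_order all_algebra all_classical all_reals all_analysis.
Import Order.TTheory GRing.Theory Num.Theory numFieldNormedType.Exports.
Set Implicit Arguments. Unset Strict Implicit. Unset Printing Implicit Defensive.
Local Open Scope ring_scope.
Local Open Scope classical_set_scope.

Section SafeBandit.
Variables (R : realType) (d : nat).
Implicit Types (u v x : 'cV[R]_d) (M : 'M[R]_d).

Definition dotv u v : R := (u^T *m v) 0 0.
Definition normv x : R := Num.sqrt (dotv x x).
Definition mnorm M x : R := Num.sqrt ((x^T *m M *m x) 0 0).

Definition is_argmax (A : set 'cV[R]_d) (f : 'cV[R]_d -> R) x :=
  A x /\ forall y, A y -> f y <= f x.
Definition is_max (A : set R) (m : R) := A m /\ forall y, A y -> y <= m.

Definition star_convex0 (X : set 'cV[R]_d) :=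
  forall x, X x -> forall mu : R, 0 <= mu <= 1 -> X (mu *: x).

(* Round-t statistics of ROFUL from the history (x_k, y_k, z_k), k = 1..t-1 *)
Definition Vmat (lam : R) (xs : nat -> 'cV[R]_d) (t : nat) : 'M[R]_d :=
  lam%:M + \sum_(1 <= k < t) (xs k *m (xs k)^T).
Definition lsq (lam : R) (xs : nat -> 'cV[R]_d) (obs : nat -> R) (t : nat) : 'cV[R]_d :=
  invmx (Vmat lam xs t) *m \sum_(1 <= k < t) (obs k *: xs k).
Definition beta (rho lam delta S : R) (t : nat) : R :=
  rho * Num.sqrt (d%:R * ln ((1 + (t - 1)%:R / lam) / (delta / 2)))
  + Num.sqrt lam * S.

(* Generic round objects, given Vi = V_t^{-1}, ah = hat a_t, th = hat theta_t,
   bt = beta_t. *)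
Section Round.
Variables (X : set 'cV[R]_d) (b nu : R) (Vi : 'M[R]_d) (ah th : 'cV[R]_d) (bt : R).

Definition Ypess : set 'cV[R]_d :=
  [set x | X x /\ dotv ah x + bt * mnorm Vi x <= b].
Definition Yopt : set 'cV[R]_d :=
  [set x | X x /\ dotv ah x - bt * mnorm Vi x <= b].
Definition ucb x : R := dotv th x + bt * mnorm Vi x.

(* the set of actions ROFUL may play (over all maximizers tilde x_t) *)
Definition roful_plays : set 'cV[R]_d :=
  [set x | exists xt mu,
     [/\ is_argmax Yopt ucb xt,
         is_max [set m | 0 <= m <= 1 /\ Ypess (m *: xt)] mu &
         x = Num.max (Num.min (nu / normv xt) 1) mu *: xt]].

Definition Yhat : set 'cV[R]_d :=
  Ypess `|` ([set x | normv x <= nu] `&` Yopt).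
Definition Ybar : set 'cV[R]_d :=
  [set x | Yhat x /\ forall z : R, 1 < z -> ~ Yhat (z *: x)].
(* alpha_t(x) = max {mu >= 0 : mu x in Yopt} (written as a supremum) *)
Definition alpha x : R := sup [set m | 0 <= m /\ Yopt (m *: x)].
Definition kappa x : R :=
  (alpha x - 1) * (dotv th x / (bt * mnorm Vi x)) + alpha x.
Definition alt_obj x : R := dotv th x + kappa x * bt * mnorm Vi x.
Definition alt_plays : set 'cV[R]_d := [set x | is_argmax Ybar alt_obj x].
End Round.

End SafeBandit.

(* The constraint functions and the optimistic index U are
   positively homogeneous, so everything is decided ray by ray. A nonzero point
   w of Yopt is stretched by alpha(w) >= 1 to the end of its ray in Yopt, and
   kappa is chosen exactly so that the alternative objective at w is
   U(alpha(w) w). Each ray through Yopt meets Ybar in exactly one point.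
   On E_conf, xstar lies in Yopt with U(xstar) >= theta^T xstar > 0, so a
   maximizer xt of U over Yopt has U(xt) > 0 and is therefore the end of its ray; the
   point gamma xt played by ROFUL is the Ybar point of that ray and
   alpha(gamma xt) = 1/gamma, so its alternative objective is max U.
   Conversely, the alternative objective of a Ybar point w is U at a point of
   Yopt and dominates U on the ray through w, so a maximizer x of it gives the
   maximizer alpha(x) x of U, from which ROFUL plays x itself. *)

From mathcomp Require Import all_boot all_order all_algebra all_classical all_reals all_analysis.
From mathcomp Require Import ring lra.
Import Order.TTheory GRing.Theory Num.Theory numFieldNormedType.Exports.
Local Open Scope ring_scope.
Local Open Scope classical_set_scope.

Section Vectors.
Context {R : realType} {d : nat}.
Implicit Types (u v w x : 'cV[R]_d) (M : 'M[R]_d).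

Lemma dotvZ u v (m : R) : dotv u (m *: v) = m * dotv u v.
Proof. by rewrite /dotv -scalemxAr mxE. Qed.

Lemma dotvD u v w : dotv u (v + w) = dotv u v + dotv u w.
Proof. by rewrite /dotv mulmxDr mxE. Qed.

Lemma dotvN u v : dotv u (- v) = - dotv u v.
Proof. by rewrite /dotv mulmxN mxE. Qed.

Lemma dotvC u v : dotv u v = dotv v u.
Proof. by rewrite /dotv -[u^T *m v]trmxK trmx_mul trmxK [in LHS]mxE. Qed.

Lemma dotvv_gt0 x : x != 0 -> 0 < dotv x x.
Proof.
have sq_ge0 i : 0 <= x i 0 ^+ 2 by exact: sqr_ge0.
have -> : dotv x x = \sum_i x i 0 ^+ 2.
  by rewrite /dotv mxE; apply: eq_bigr => i _; rewrite mxE expr2.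
move=> x0; rewrite lt_neqAle sumr_ge0 // andbT eq_sym psumr_eq0 //.
apply: contra x0 => /allP x_eq0; apply/eqP/matrixP => i j.
by rewrite ord1 mxE; apply/eqP; rewrite -sqrf_eq0 (implyP (x_eq0 i _)) ?mem_index_enum.
Qed.

Lemma mnormZ M x (m : R) : mnorm M (m *: x) = `|m| * mnorm M x.
Proof.
rewrite /mnorm; have -> : (m *: x)^T = m *: x^T by rewrite linearZ.
rewrite -!scalemxAl -scalemxAr !mxE mulrA -expr2.
by rewrite sqrtrM ?sqr_ge0 // sqrtr_sqr.
Qed.

Lemma normvZ x (m : R) : normv (m *: x) = `|m| * normv x.
Proof. by have := mnormZ 1%:M x m; rewrite /mnorm !mulmx1. Qed.

Lemma normv_gt0 x : x != 0 -> 0 < normv x.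
Proof. by move=> /dotvv_gt0; rewrite sqrtr_gt0. Qed.

Lemma dotv_conf u v x (r : R) :
  `|dotv x (u - v)| <= r -> dotv v x - r <= dotv u x <= dotv v x + r.
Proof.
rewrite dotvD dotvN [dotv x u]dotvC [dotv x v]dotvC ler_norml => /andP[lb ub].
apply/andP; split; lra.
Qed.

End Vectors.

Section PositiveDefinite.
Context {R : realType} {d : nat}.
Implicit Types (x y : 'cV[R]_d) (M : 'M[R]_d).

Definition posdef M := forall x, x != 0 -> 0 < (x^T *m M *m x) 0 0.

Lemma posdef_unitmx M : posdef M -> M \in unitmx.
Proof.
move=> pdM; rewrite -row_free_unit -kermx_eq0; apply/eqP/row_matrixP => i.
set r := row i _; have rM : r *m M = 0 by rewrite -row_mul mulmx_ker row0.
rewrite row0; apply/eqP/contraT => r0.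
have := pdM r^T; rewrite trmxK rM mul0mx mxE ltxx; apply.
by apply: contra r0 => /eqP r0; rewrite -[r]trmxK r0 linear0.
Qed.

Lemma posdef_invmx M : M^T = M -> posdef M -> posdef (invmx M).
Proof.
move=> symM pdM x; have Mu := posdef_unitmx _ pdM.
have [y ->] : exists y, x = M *m y by exists (invmx M *m x); rewrite mulKVmx.
move=> My0; rewrite trmx_mul symM -mulmxA mulKmx //; apply: pdM.
by apply: contra My0 => /eqP ->; rewrite mulmx0.
Qed.

Lemma mnorm_gt0 M x : posdef M -> x != 0 -> 0 < mnorm M x.
Proof. by move=> pdM /pdM; rewrite sqrtr_gt0. Qed.

Lemma Vmat_sym (lam : R) (xs : nat -> 'cV[R]_d) t : (Vmat lam xs t)^T = Vmat lam xs t.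
Proof.
rewrite /Vmat linearD /= tr_scalar_mx linear_sum /=; congr (_ + _).
by apply: eq_bigr => k _; rewrite trmx_mul trmxK.
Qed.

Lemma Vmat_posdef (lam : R) (xs : nat -> 'cV[R]_d) t : 0 < lam -> posdef (Vmat lam xs t).
Proof.
move=> lam0 y y0; rewrite /Vmat mulmxDr mulmxDl mxE mul_mx_scalar -scalemxAl mxE.
apply: ltr_pwDl; first by rewrite mulr_gt0 // dotvv_gt0.
rewrite mulmx_sumr mulmx_suml summxE sumr_ge0 // => k _.
rewrite mulmxA -mulmxA mxE big_ord1 (ord1 ord0).
by rewrite -/(dotv y (xs k)) -/(dotv (xs k) y) dotvC -expr2 sqr_ge0.
Qed.

End PositiveDefinite.

Lemma mulr01_le (R : realDomainType) (m c b : R) : 0 <= m <= 1 -> 0 <= b -> c <= b -> m * c <= b.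
Proof.
move=> /andP[m0 m1] b0 cb; have [c0|c0] := lerP c 0.
  by apply: le_trans b0; rewrite mulr_ge0_le0.
by apply: le_trans cb; rewrite ler_piMl // ltW.
Qed.

Section RealSets.
Context {R : realType}.
Implicit Types A : set R.

Lemma closed_sup_mem A : closed A -> A !=set0 -> has_ubound A -> A (sup A).
Proof. by move=> /closure_id cA A0 ubA; rewrite [X in X _]cA; exact: closure_sup. Qed.

Lemma closed_mulr_le (c k : R) : closed [set m : R | m * c <= k].
Proof.
apply: (@preimage_closed _ _ (fun m : R => m * c) [set y | y <= k]); last exact: closed_le.
by move=> m _; exact: scalel_continuous.
Qed.

Lemma sup_max A x : A x -> ubound A x -> sup A = x.
Proof.
move=> Ax ubx; apply/le_anti; rewrite ge_sup //=; last by exists x.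
by apply: ub_le_sup => //; exists x.
Qed.

End RealSets.

Section Round.
Variables (R : realType) (d : nat) (X : set 'cV[R]_d) (b nu : R).
Variables (Vi : 'M[R]_d) (ah th : 'cV[R]_d) (bt : R) (xpos : 'cV[R]_d).
Hypotheses (closedX : closed X) (starX : star_convex0 X)
  (X_le1 : forall x, X x -> normv x <= 1)
  (b_gt0 : 0 < b) (nu_gt0 : 0 < nu) (bt_gt0 : 0 < bt) (Vi_pd : posdef Vi).
Implicit Types (w x y : 'cV[R]_d) (m : R).

Local Notation Yo := (Yopt X b Vi ah bt).
Local Notation Yp := (Ypess X b Vi ah bt).
Local Notation Yh := (Yhat X b nu Vi ah bt).
Local Notation Yb := (Ybar X b nu Vi ah bt).
Local Notation U := (ucb Vi th bt).
Local Notation al := (alpha X b Vi ah bt).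
Local Notation obj := (alt_obj X b Vi ah th bt).

Definition copt x := dotv ah x - bt * mnorm Vi x.
Definition cpess x := dotv ah x + bt * mnorm Vi x.
(* [bscale xt] is ROFUL's \tilde b_t, and [Num.max (bscale xt) mu] its gamma_t. *)
Definition bscale x := Num.min (nu / normv x) 1.
Definition ray (A : set 'cV[R]_d) x : set R := [set m | 0 <= m /\ A (m *: x)].

Lemma coptZ x m : 0 <= m -> copt (m *: x) = m * copt x.
Proof. by move=> m0; rewrite /copt dotvZ mnormZ ger0_norm // mulrBr mulrCA. Qed.

Lemma cpessZ x m : 0 <= m -> cpess (m *: x) = m * cpess x.
Proof. by move=> m0; rewrite /cpess dotvZ mnormZ ger0_norm // mulrDr mulrCA. Qed.

Lemma ucbZ x m : 0 <= m -> U (m *: x) = m * U x.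
Proof. by move=> m0; rewrite /ucb dotvZ mnormZ ger0_norm // mulrDr mulrCA. Qed.

Lemma ucb0 : U 0 = 0.
Proof. by rewrite -(scale0r (0 : 'cV[R]_d)) ucbZ // mul0r. Qed.

Lemma Yopt_scale x m : 0 <= m <= 1 -> Yo x -> Yo (m *: x).
Proof.
move=> m01 [Xx cx]; split; first exact: starX.
have /andP[m0 _] := m01; by rewrite -/(copt _) coptZ // mulr01_le // ltW.
Qed.

Lemma Ypess_sub_Yopt : Yp `<=` Yo.
Proof.
move=> x [Xx cx]; split => //; apply: le_trans cx.
have : 0 <= bt * mnorm Vi x by rewrite mulr_ge0 ?sqrtr_ge0 ?ltW.
lra.
Qed.

Lemma Yhat_sub_Yopt : Yh `<=` Yo.
Proof. by move=> x [/Ypess_sub_Yopt|[]]. Qed.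

Lemma ray_le_invnorm (A : set 'cV[R]_d) x m :
  A `<=` X -> x != 0 -> ray A x m -> m <= (normv x)^-1.
Proof.
move=> AX x0 [m0 /AX/X_le1]; rewrite normvZ ger0_norm // => mx1.
by rewrite -(mul1r (normv x)^-1) ler_pdivlMr // normv_gt0.
Qed.

Lemma has_ubound_ray (A : set 'cV[R]_d) x : A `<=` X -> x != 0 -> has_ubound (ray A x).
Proof. by move=> AX x0; exists (normv x)^-1 => m; exact: ray_le_invnorm. Qed.

Lemma closed_ray_le x c :
  closed [set m : R | 0 <= m /\ X (m *: x) /\ m * c <= b].
Proof.
have -> : [set m : R | 0 <= m /\ X (m *: x) /\ m * c <= b] =
    [set m | 0 <= m] `&` ([set m | X (m *: x)] `&` [set m | m * c <= b]).
  by apply/seteqP; split => m /=.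
apply: closedI; first exact: closed_ge.
apply: closedI; last exact: closed_mulr_le.
by apply: preimage_closed => // m _; exact: scalel_continuous.
Qed.

Lemma closed_ray_Yopt x : closed (ray Yo x).
Proof.
have -> : ray Yo x = [set m | 0 <= m /\ X (m *: x) /\ m * copt x <= b].
  by apply/seteqP; split => m /= [m0 [Xm cm]]; rewrite -?coptZ // -/(copt _) coptZ in cm.
exact: closed_ray_le.
Qed.

Lemma closed_ray_Ypess x : closed (ray Yp x).
Proof.
have -> : ray Yp x = [set m | 0 <= m /\ X (m *: x) /\ m * cpess x <= b].
  by apply/seteqP; split => m /= [m0 [Xm cm]]; rewrite -?cpessZ // -/(cpess _) cpessZ in cm.
exact: closed_ray_le.
Qed.

Lemma closed_ray_Yhat x : closed (ray Yh x).
Proof.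
have -> : ray Yh x = ray Yp x `|` (ray Yo x `&` [set m | m * normv x <= nu]).
  apply/seteqP; split => m.
    case=> m0 [Ypm|[nm Yom]]; first by left.
    by right; split => //; move: nm; rewrite /= normvZ ger0_norm.
  case=> [[m0 Ypm]|[[m0 Yom] nm]]; split => //; first by left.
  by right; split => //; rewrite /= normvZ ger0_norm.
apply: closedU; first exact: closed_ray_Ypess.
by apply: closedI; [exact: closed_ray_Yopt|exact: closed_mulr_le].
Qed.

Section Alpha.
Variable w : 'cV[R]_d.
Hypotheses (w_neq0 : w != 0) (Yo_w : Yo w).

Lemma ray_Yopt_alpha : ray Yo w (al w).
Proof.
apply: closed_sup_mem; first exact: closed_ray_Yopt.
  by exists 1; split; rewrite ?ler01 // scale1r.
by apply: has_ubound_ray => // x [].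
Qed.

Lemma alpha_ub m : ray Yo w m -> m <= al w.
Proof. by apply: ub_le_sup; apply: has_ubound_ray => // x []. Qed.

Lemma alpha_ge1 : 1 <= al w.
Proof. by apply: alpha_ub; split; rewrite ?ler01 // scale1r. Qed.

Lemma alt_objE : obj w = U (al w *: w).
Proof.
have [al_ge0 _] := ray_Yopt_alpha.
have n_neq0 : bt * mnorm Vi w != 0 by rewrite mulf_neq0 ?gt_eqF ?mnorm_gt0.
rewrite ucbZ // /alt_obj /kappa /ucb -mulrA.
move: n_neq0; set n := bt * mnorm Vi w => n_neq0; by field.
Qed.

End Alpha.

Lemma Ybar_neq0 w : Yb w -> w != 0.
Proof.
move=> [Yw Ymax]; apply/negP => /eqP w0; apply: (Ymax 2); first by rewrite ltr1n.
by rewrite w0 scaler0 -w0.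
Qed.

Lemma Ybar_ray_uniq x s : Yb x -> Yb (s *: x) -> 0 < s -> s = 1.
Proof.
move=> [Yx Xmax] [Ysx SXmax] s0; have [s1|s1|//] := ltgtP s 1; exfalso.
  by apply: (SXmax s^-1); rewrite ?invf_gt1 // scalerA mulVf ?gt_eqF // scale1r.
exact: Xmax s s1 Ysx.
Qed.

Lemma Ybar_max_scale x m : 0 < m -> Yh (m *: x) -> ubound (ray Yh x) m -> Yb (m *: x).
Proof.
move=> m0 Yhm mmax; split => // z z1; rewrite scalerA => Yhz.
have : z * m <= m by apply: mmax; split; rewrite // mulr_ge0 ?ltW // (lt_trans ltr01).
by rewrite leNgt ltr_pMl ?z1.
Qed.

Lemma bscale_gt0 x : x != 0 -> 0 < bscale x.
Proof. by move=> x0; rewrite lt_min ltr01 andbT divr_gt0 ?normv_gt0. Qed.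

Lemma Yhat_bscale x : x != 0 -> Yo x -> Yh (bscale x *: x).
Proof.
move=> x0 Yx; right; split.
  rewrite /= normvZ ger0_norm; last exact/ltW/bscale_gt0.
  by rewrite -ler_pdivlMr ?normv_gt0 // ge_min lexx.
by apply: Yopt_scale => //; rewrite ltW ?bscale_gt0 //= ge_min lexx orbT.
Qed.

Lemma Ybar_exists_ray y : Yo y -> y != 0 -> exists2 s, 0 < s & Yb (s *: y).
Proof.
move=> Yy y0; have bs0 := bscale_gt0 _ y0.
have ray_bs : ray Yh y (bscale y) by split; [exact: ltW|exact: Yhat_bscale].
have ub : has_ubound (ray Yh y) by apply: has_ubound_ray => // x /Yhat_sub_Yopt [].
have [_ Yhs] := closed_sup_mem _ (closed_ray_Yhat y) (ex_intro _ _ ray_bs) ub.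
have s0 : 0 < sup (ray Yh y) by apply: lt_le_trans bs0 _; exact: ub_le_sup.
by exists (sup (ray Yh y)) => //; apply: Ybar_max_scale => //; exact: ub_le_sup.
Qed.

Lemma exists_pess_scale xt : X xt ->
  exists mu, is_max [set m | 0 <= m <= 1 /\ Yp (m *: xt)] mu.
Proof.
move=> Xxt; set P := ray Yp xt `&` [set m | m <= 1].
have -> : [set m | 0 <= m <= 1 /\ Yp (m *: xt)] = P.
  apply/seteqP; split => m /=; first by case=> /andP[m0 m1].
  by case=> -[m0 Ypm] m1; rewrite m0 m1.
have P0 : P 0.
  split; last exact: ler01.
  split; first exact: lexx.
  split; first by apply: starX; rewrite ?lexx ?ler01.
  by rewrite -/(cpess _) cpessZ ?lexx // mul0r ltW.
have ub : has_ubound P by exists 1 => m [].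
exists (sup P); split; last exact: ub_le_sup.
apply: closed_sup_mem ub; last by exists 0.
by apply: closedI; [exact: closed_ray_Ypess|exact: closed_le].
Qed.

Hypotheses (Yopt_xpos : Yo xpos) (ucb_xpos_gt0 : 0 < U xpos).

Section RofulPlay.
Variables (xt : 'cV[R]_d) (mu : R).
Hypotheses (xt_argmax : is_argmax Yo U xt)
  (mu_max : is_max [set m | 0 <= m <= 1 /\ Yp (m *: xt)] mu).
Local Notation g := (Num.max (bscale xt) mu).

Lemma ucb_xt_gt0 : 0 < U xt.
Proof. exact: lt_le_trans ucb_xpos_gt0 (xt_argmax.2 _ Yopt_xpos). Qed.

Lemma xt_neq0 : xt != 0.
Proof. by apply/negP => /eqP xt0; have := ucb_xt_gt0; rewrite xt0 ucb0 ltxx. Qed.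

Lemma ray_Yopt_xt_le1 m : ray Yo xt m -> m <= 1.
Proof.
move=> [m0 Ym]; have := xt_argmax.2 _ Ym; rewrite ucbZ //.
by rewrite -[leRHS]mul1r ler_pM2r // ucb_xt_gt0.
Qed.

Lemma gamma_gt0 : 0 < g.
Proof. by apply: lt_le_trans (bscale_gt0 _ xt_neq0) _; rewrite le_max lexx. Qed.

Lemma Ybar_gamma : Yb (g *: xt).
Proof.
apply: Ybar_max_scale; first exact: gamma_gt0.
  have [bs_le_mu|mu_lt_bs] := leP (bscale xt) mu; last first.
    exact: Yhat_bscale xt_neq0 xt_argmax.1.
  by left; have [[_ ?] _] := mu_max.
move=> k [k0 [Ypk|[nk Yok]]].
  have k01 : 0 <= k <= 1.
    by rewrite k0 ray_Yopt_xt_le1 //; split => //; exact: Ypess_sub_Yopt.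
  by apply: le_trans (mu_max.2 k (conj k01 Ypk)) _; rewrite le_max lexx orbT.
apply: le_trans (_ : bscale xt <= g); last by rewrite le_max lexx.
rewrite le_min ray_Yopt_xt_le1 // andbT ler_pdivlMr ?normv_gt0 ?xt_neq0 //.
by move: nk; rewrite /= normvZ ger0_norm.
Qed.

Lemma alpha_gamma : al (g *: xt) = g^-1.
Proof.
have g0 := gamma_gt0.
apply: sup_max.
  by split; rewrite ?invr_ge0 ?ltW // scalerA mulVf ?gt_eqF // scale1r; exact: xt_argmax.1.
move=> m [m0]; rewrite scalerA => Ym.
have := ray_Yopt_xt_le1 _ (conj (mulr_ge0 m0 (ltW g0)) Ym).
by rewrite -(div1r g) ler_pdivlMr.
Qed.

Lemma alt_obj_gamma : obj (g *: xt) = U xt.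
Proof.
have g0 := gamma_gt0; have [Yhg _] := Ybar_gamma.
rewrite alt_objE; [|exact: Ybar_neq0 _ Ybar_gamma|exact: Yhat_sub_Yopt _ Yhg].
by rewrite alpha_gamma scalerA mulVf ?gt_eqF // scale1r.
Qed.

Lemma alt_obj_le_ucb_xt w : Yb w -> obj w <= U xt.
Proof.
move=> Ybw; have w0 := Ybar_neq0 _ Ybw; have Yow := Yhat_sub_Yopt _ Ybw.1.
by rewrite alt_objE //; apply: xt_argmax.2; have [] := ray_Yopt_alpha _ w0 Yow.
Qed.

End RofulPlay.

Section AltPlay.
Variable x : 'cV[R]_d.
Hypothesis x_argmax : is_argmax Yb obj x.

Lemma ucb_le_alt_obj y : Yo y -> U y <= obj x.
Proof.
suff ucb_le y' : Yo y' -> y' != 0 -> 0 <= U y' -> U y' <= obj x.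
  have xpos0 : xpos != 0 by apply: contraTneq ucb_xpos_gt0 => ->; rewrite ucb0 ltxx.
  have obj_gt0 := lt_le_trans ucb_xpos_gt0 (ucb_le _ Yopt_xpos xpos0 (ltW ucb_xpos_gt0)).
  move=> Yy; have [->|y0] := eqVneq y 0; first by rewrite ucb0 ltW.
  have [Uy0|Uy0] := lerP 0 (U y); first exact: ucb_le.
  by rewrite ltW // (lt_trans Uy0).
move=> Yy y0 Uy0; have [s s0 Ybsy] := Ybar_exists_ray _ Yy y0.
apply: le_trans (x_argmax.2 _ Ybsy).
have sy0 := Ybar_neq0 _ Ybsy; have Yosy := Yhat_sub_Yopt _ Ybsy.1.
rewrite alt_objE // scalerA ucbZ; last exact: mulr_ge0 (ray_Yopt_alpha _ sy0 Yosy).1 (ltW s0).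
apply: ler_peMl => //; rewrite -ler_pdivrMr // div1r; apply: alpha_ub => //.
by split; rewrite ?invr_ge0 ?ltW // scalerA mulVf ?gt_eqF // scale1r.
Qed.

Lemma alpha_argmax : is_argmax Yo U (al x *: x).
Proof.
have x0 := Ybar_neq0 _ x_argmax.1; have Yox := Yhat_sub_Yopt _ x_argmax.1.1.
split; first exact: (ray_Yopt_alpha _ x0 Yox).2.
by move=> y /ucb_le_alt_obj; rewrite alt_objE.
Qed.

Lemma alt_play_roful : roful_plays X b nu Vi ah th bt x.
Proof.
have x0 := Ybar_neq0 _ x_argmax.1; have Yox := Yhat_sub_Yopt _ x_argmax.1.1.
have [mu mu_max] := exists_pess_scale _ alpha_argmax.1.1.
exists (al x *: x), mu; split => //; first exact: alpha_argmax.
have := Ybar_gamma _ _ alpha_argmax mu_max; rewrite scalerA => Ybx.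
have al_gt0 := lt_le_trans ltr01 (alpha_ge1 _ x0 Yox).
have g0 := gamma_gt0 _ mu alpha_argmax.
by rewrite (Ybar_ray_uniq _ _ x_argmax.1 Ybx) ?scale1r // mulr_gt0.
Qed.

End AltPlay.

Lemma roful_playsE : roful_plays X b nu Vi ah th bt = alt_plays X b nu Vi ah th bt.
Proof.
apply/seteqP; split => [_ [xt [mu [xt_argmax mu_max ->]]]|x x_argmax].
  split; first exact: Ybar_gamma.
  by move=> w /(alt_obj_le_ucb_xt _ xt_argmax); rewrite alt_obj_gamma.
exact: alt_play_roful.
Qed.

End Round.

Lemma beta_gt0 (R : realType) (d : nat) (rho lam delta S : R) t :
  0 <= rho -> 0 < lam -> 0 < S -> 0 < beta d rho lam delta S t.
Proof.
move=> rho0 lam0 S0; apply: ltr_wpDl; first by rewrite mulr_ge0 ?sqrtr_ge0.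
by rewrite mulr_gt0 ?sqrtr_gt0.
Qed.


Theorem proposition1 (R : realType) (d : nat) (X : set 'cV[R]_d)
  (theta a : 'cV[R]_d) (b S_a S_th rho delta lam : R)
  (xs : nat -> 'cV[R]_d) (eps eta : nat -> R) (xstar : 'cV[R]_d) :
  let S := Num.max S_a S_th in
  let nu := b / S_a in
  let ys := fun k => dotv theta (xs k) + eps k in
  let zs := fun k => dotv a (xs k) + eta k in
  let Vi := fun t => invmx (Vmat lam xs t) in
  let ah := fun t => lsq lam xs zs t in
  let th := fun t => lsq lam xs ys t in
  let bt := fun t => beta d rho lam delta S t in
  closed X -> star_convex0 X -> (forall x, X x -> normv x <= 1) ->
  0 < b -> 0 < S_a -> normv a <= S_a -> normv theta <= S_th -> nu <= 1 ->
  0 < rho -> 0 < delta < 1 -> 1 <= lam ->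
  (forall k, X (xs k)) ->
  is_argmax [set x | X x /\ dotv a x <= b] (dotv theta) xstar ->
  0 < dotv theta xstar ->
  (* the event E_conf *)
  (forall t, (1 <= t)%N -> forall x, X x ->
     `|dotv x (th t - theta)| <= bt t * mnorm (Vi t) x /\
     `|dotv x (ah t - a)| <= bt t * mnorm (Vi t) x) ->
  forall t, (1 <= t)%N ->
    roful_plays X b nu (Vi t) (ah t) (th t) (bt t) =
    alt_plays X b nu (Vi t) (ah t) (th t) (bt t).
Proof.
move=> S nu ys zs Vi ah th bt closedX starX X_le1 b_gt0 Sa_gt0 _ _ _ rho_gt0 _
  lam_ge1 _ [[Xstar a_xstar] _] theta_xstar conf t t_ge1.
have lam_gt0 : 0 < lam by apply: lt_le_trans lam_ge1.
have [/dotv_conf/andP[th_lb _] /dotv_conf/andP[_ ah_ub]] := conf t t_ge1 _ Xstar.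
apply: (@roful_playsE _ _ X b nu (Vi t) (ah t) (th t) (bt t) xstar) => //.
- by rewrite divr_gt0.
- by apply: beta_gt0 (ltW rho_gt0) lam_gt0 _; rewrite lt_max Sa_gt0.
- by apply: posdef_invmx; [exact: Vmat_sym|exact: Vmat_posdef].
- by split => //; lra.
- by rewrite /ucb; lra.
Qed.
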